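(* Let $I$ be a non-empty descent set with $s=s(I)$ and Naruse-Newton coefficients $(C_0,\ldots,C_s)$, and let $a,b$ be integers with $s\ge b>a\ge 0$. Then $\frac{C_a(I)}{C_b(I)}=\frac{a!}{b!}$ if and only if $w(I)\ge b$.
   Context: Partitions are drawn as Young diagrams $\mathbb{D}(\lambda)$ in English notation; $c_{i,j}$ is the cell in row $i$, column $j$; $\lambda'$ is the conjugate partition ($\lambda'_j$ = number of cells in column $j$). The hook length $h_\lambda(c)$ is the number of cells of $\mathbb{D}(\lambda)$ weakly right of $c$ in its row or weakly below $c$ in its column (counting $c$ once). For $\mu\subseteq\lambda$, an excited diagram of $\lambda/\mu$ is a subset of $\mathbb{D}(\lambda)$ obtained from $\mathbb{D}(\mu)$ by repeatedly replacing a cell $c_{i,j}\in D$ by $c_{i+1,j+1}$, allowed iff $c_{i+1,j+1}\in\mathbb{D}(\lambda)$ and none of $c_{i,j+1},c_{i+1,j},c_{i+1,j+1}$ lies in $D$; $\mathbb{E}(\lambda/\mu)$ is their set. A ribbon with $n$ cells is read from its lower-left to its upper-right cell, each successive cell directly right of or directly above the previous; it corresponds to the set of $i\in\{1,\ldots,n-1\}$ with cell $i$ directly below cell $i+1$. A descent set is a non-empty finite set $I$ of positive integers; $\lambda^I$ is the unique partition with $\lambda^I_1=\lambda^I_2$ such that the cells $c_{i,j}\in\mathbb{D}(\lambda^I)$ with fewer than three of $c_{i,j+1},c_{i+1,j},c_{i+1,j+1}$ in $\mathbb{D}(\lambda^I)$ form a ribbon corresponding to $I$; this ribbon is $\mathbb{D}(\lambda^I)\setminus\mathbb{D}(\mu^I)$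 for a partition $\mu^I$. Let $s(I)=\lambda^I_1-1$. Naruse-Newton coefficients: every excited diagram of $\lambda^I/\mu^I$ meets row 1 in $\{c_{1,1},\ldots,c_{1,r}\}$, $0\le r\le s$; for $0\le j\le s(I)$, $C_j(I)=\sum_D\prod_{c\in D,\,c\notin\text{row }1}h_{\lambda^I}(c)$, summed over $D\in\mathbb{E}(\lambda^I/\mu^I)$ with exactly $s-j$ cells in row 1. $w(I)$ is the number of integers $j$ with $1\le j\le s(I)+1$ and $(\lambda^I)'_j=2$. *)

(* Conventions: cells are 0-indexed pairs (row, column);
   the paper's c_{i,j} is our (i-1, j-1). *)
From HB Require Import structures.
From mathcomp Require Import all_boot all_order all_algebra finmap.
Set Implicit Arguments. Unset Strict Implicit. Unset Printing Implicit Defensive.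

Definition is_partition (la : seq nat) : bool :=
  sorted geq la && all (fun x => 0 < x) la.

Definition inD (la : seq nat) (i j : nat) : bool :=
  (i < size la) && (j < nth 0 la i).

Definition rim_cell (la : seq nat) (i j : nat) : bool :=
  inD la i j && (inD la i j.+1 + inD la i.+1 j + inD la i.+1 j.+1 < 3).

(* The set of cells R forms a ribbon corresponding to the descent set I:
   R is enumerated (without repetition) as cells 1..n, each successive cell
   directly right of or directly above the previous one, and
   I = {k in 1..n-1 | cell k is directly below cell k+1}. *)
Definition ribbon_of_descents (R : nat -> nat -> bool) (I : {fset nat}) : Prop :=
  exists p : seq (nat * nat),
    [/\ uniq p,
        (forall i j, ((i, j) \in p) = R i j),
        (forall k, k.+1 < size p ->
           let c := nth (0, 0) p k in let d := nth (0, 0) p k.+1 in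
           ((d.1 == c.1) && (d.2 == c.2.+1)) || ((d.1.+1 == c.1) && (d.2 == c.2)))
      & (forall k, (k \in I) =
           [&& 0 < k, k < size p &
             (let c := nth (0, 0) p k.-1 in let d := nth (0, 0) p k in
              (c.1 == d.1.+1) && (c.2 == d.2))])].

Definition lambdaI (I : {fset nat}) (la : seq nat) : Prop :=
  [/\ is_partition la, nth 0 la 0 = nth 0 la 1 & ribbon_of_descents (rim_cell la) I].

Definition muI (la mu : seq nat) : Prop :=
  is_partition mu /\ (forall i j, inD mu i j = inD la i j && ~~ rim_cell la i j).

Definition sI (la : seq nat) : nat := (nth 0 la 0).-1.

(* conj_part la j = la'_{j+1} = number of cells in (0-indexed) column j *)
Definition conj_part (la : seq nat) (j : nat) : nat := count (fun r => j < r) la.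

Definition wI (la : seq nat) : nat :=
  count (fun j => conj_part la j == 2) (iota 0 (sI la).+1).

Notation cellT la := ('I_(size la) * 'I_(nth 0 la 0))%type.

Definition hook (la : seq nat) (c : cellT la) : nat :=
  #|[set x : cellT la | inD la x.1 x.2 &&
      ((((x.1 : nat) == c.1) && (c.2 <= x.2)) || (((x.2 : nat) == c.2) && (c.1 <= x.1)))]|.

Definition inS (la : seq nat) (D : {set cellT la}) (i j : nat) : bool :=
  [exists x in D, ((x.1 : nat) == i) && ((x.2 : nat) == j)].

Definition exc_allowed (la : seq nat) (D : {set cellT la}) (c : cellT la) : bool :=
  [&& inD la c.1.+1 c.2.+1, ~~ inS D c.1 c.2.+1, ~~ inS D c.1.+1 c.2
    & ~~ inS D c.1.+1 c.2.+1].

Definition exc_step (la : seq nat) : rel {set cellT la} := fun D E =>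
  [exists c in D, exc_allowed D c &&
     (E == [set x : cellT la | ((x \in D) && (x != c)) ||
                    (((x.1 : nat) == c.1.+1) && ((x.2 : nat) == c.2.+1))])].

Definition Dmu (la mu : seq nat) : {set cellT la} := [set x : cellT la | inD mu x.1 x.2].

Definition excited (la mu : seq nat) (D : {set cellT la}) : bool :=
  connect (@exc_step la) (Dmu la mu) D.

Definition NN (la mu : seq nat) (j : nat) : nat :=
  \sum_(D : {set cellT la} |
          excited mu D && (#|[set x in D | (x.1 : nat) == 0]| == sI la - j))
     \prod_(c in D | (c.1 : nat) != 0) hook c.

From HB Require Import structures.
From mathcomp Require Import all_boot all_order all_algebra finmap zify.
Set Implicit Arguments. Unset Strict Implicit. Unset Printing Implicit Defensive.

(* The inner shape has mu_k = la_(k+1) - 1, so in an excited diagram every cell of mu moves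
   at most once, and such a diagram is assembled row by row: if t cells of row k of mu stay
   in place, the other cells of that row sit one step down-right, and the rows below row k
   form an excited diagram keeping at most t cells in row k+1.  Along this decomposition the
   coefficients become C_j = W_j * U(s - j), where U(t) is the total hook weight of the
   excited diagrams of the rows below the first one keeping at most t cells in the second
   row.  Comparing consecutive terms row by row, by downward induction, gives
   C_j <= j * C_(j-1), with equality as long as the relevant hook in the second row has an
   empty leg, i.e. exactly for j <= w(I), and strict inequality afterwards. *)

Lemma connect_ind (T : finType) (e : rel T) (x0 : T) (P : T -> Prop) :
  P x0 -> (forall y z, connect e x0 y -> P y -> e y z -> P z) ->
  forall y, connect e x0 y -> P y.
Proof.
move=> P0 Pstep y /connectP [p e_p ->].
elim/last_ind: p e_p => [//|p z IHp].
rewrite rcons_path last_rcons => /andP [e_p e_z].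
by apply: Pstep (IHp e_p) e_z; apply/connectP; exists p.
Qed.

Lemma count_iota_interval a b n :
  count (fun z => a <= z < b) (iota 0 n) = minn n b - minn n a.
Proof.
elim: n => [|n IHn]; first by rewrite /= !min0n.
by rewrite -addn1 iotaD count_cat IHn /= addn0; lia.
Qed.

Lemma card_ord_interval n a b : b <= n -> #|[set z : 'I_n | a <= z < b]| = b - a.
Proof.
move=> le_bn; rewrite cardsE cardE /enum_mem -enumT /= size_filter.
rewrite -(count_map val (fun z => a <= z < b)) val_enum_ord count_iota_interval.
lia.
Qed.

Lemma partial_sum_ratio (T : nat -> nat) (m l r : nat) : r.+1 < m ->
  (forall q, q <= r -> (m - q + l) * T q <= (m - q.+1) * T q.+1) ->
  l * \sum_(q < r.+1) T q + (0 < \sum_(q < r.+1) T q) <= (m - r.+1) * T r.+1.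
Proof.
elim: r => [|r IHr] lt_r ratio.
  rewrite big_ord1; apply: leq_trans (ratio 0 (leqnn 0)); rewrite subn0 mulnDl.
  case: (T 0) => [|t]; first by rewrite !muln0.
  by have := leq_pmulr m (ltn0Sn t); lia.
have IH := IHr (ltnW lt_r) (fun q le_q => ratio q (leqW le_q)).
rewrite big_ord_recr /=; set S := \sum_(q < r.+1) T q in IH *.
apply: leq_trans (ratio r.+1 (leqnn _)); rewrite mulnDl mulnDr.
have pos_T : 0 < T r.+1 -> m - r.+1 <= (m - r.+1) * T r.+1 by apply: leq_pmulr.
move: IH; case: (posnP S) => [-> | S_gt0]; rewrite ?muln0 /=; last lia.
by case: (posnP (T r.+1)) pos_T => [->|]; lia.
Qed.

Lemma conj_part_gt (s : seq nat) j n : sorted geq s -> (n < conj_part s j) = (j < nth 0 s n).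
Proof.
rewrite /conj_part; elim: s n => [|x s IHs] n sorted_xs; first by rewrite nth_nil.
have le_x : all (geq x) s.
  by apply: order_path_min sorted_xs => y z w le_zy le_wz; apply: leq_trans le_wz le_zy.
have {}IHs := IHs _ (path_sorted sorted_xs).
case: (ltnP j x) => [lt_jx | le_xj] /=; first by case: n => [|n] //=; rewrite lt_jx add1n ltnS.
have -> : count (fun r => j < r) s = 0.
  by apply/eqP; rewrite -leqn0 leqNgt -has_count; apply/hasPn => y /(allP le_x) /=; lia.
rewrite [j < x]ltnNge le_xj /= ltn0; case: n => [|n] /=; first by rewrite ltnNge le_xj.
case: (ltnP n (size s)) => [lt_n | le_n]; last by rewrite nth_default.
by have /= := allP le_x _ (mem_nth 0 lt_n); lia.
Qed.

Section Diagram.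
Variable la : seq nat.
Hypothesis la_part : is_partition la.

Local Notation lam i := (nth 0 la i).
Local Notation cell := (cellT la).

Lemma nth_part_leq i j : i <= j -> lam j <= lam i.
Proof.
move=> le_ij; case: (ltnP j (size la)) => [lt_j|le_j]; last by rewrite nth_default.
case/andP: la_part => sorted_la _.
by apply: (sorted_leq_nth (leT := geq)) => //= [x y z|x|]; rewrite ?inE //; lia.
Qed.

Lemma inDE i j : inD la i j = (j < lam i).
Proof. by rewrite /inD; case: ltnP => //= le_i; rewrite nth_default. Qed.

Lemma inD_box i j : j < lam i -> (i < size la) && (j < lam 0).
Proof.
move=> lt_j; have lt_i : i < size la.
  by case: (ltnP i (size la)) lt_j => // le_i; rewrite nth_default.
by rewrite lt_i (leq_trans lt_j (nth_part_leq (leq0n i))).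
Qed.

Lemma cell_eq (x y : cell) : (x == y) = ((x.1 : nat) == y.1) && ((x.2 : nat) == y.2).
Proof. by case: x y => [a b] [c d]. Qed.

Lemma inS_mem (D : {set cell}) (x : cell) : inS D x.1 x.2 = (x \in D).
Proof.
apply/existsP/idP => [[y /and3P [Dy /eqP y1 /eqP y2]]|Dx]; last first.
  by exists x; rewrite Dx !eqxx.
by have -> : x = y by apply/eqP; rewrite cell_eq y1 y2 !eqxx.
Qed.

Lemma inS_box (D : {set cell}) i j : inS D i j -> (i < size la) && (j < lam 0).
Proof. by case/existsP => x /and3P [_ /eqP <- /eqP <-]; rewrite !ltn_ord. Qed.

Lemma eq_set_inS (D E : {set cell}) : inS D =2 inS E -> D = E.
Proof. by move=> eq_DE; apply/setP => x; rewrite -!inS_mem eq_DE. Qed.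

Lemma inSP (D : {set cell}) i j :
  reflect (exists2 x : cell, x \in D & ((x.1 : nat) = i) /\ ((x.2 : nat) = j)) (inS D i j).
Proof.
apply: (iffP existsP) => [[x /and3P [Dx /eqP x1 /eqP x2]]|[x Dx [x1 x2]]]; exists x => //.
by rewrite Dx x1 x2 !eqxx.
Qed.

Definition cells (p : nat -> nat -> bool) : {set cell} := [set x : cell | p x.1 x.2].

Lemma inS_cells (p : nat -> nat -> bool) i j :
  inS (cells p) i j = [&& i < size la, j < lam 0 & p i j].
Proof.
apply/inSP/and3P => [[x] | [lt_i lt_j p_ij]]; last first.
  by exists (Ordinal lt_i, Ordinal lt_j); rewrite ?inE.
by rewrite inE => p_x [<- <-]; rewrite !ltn_ord.
Qed.

Lemma inS_cellsE (p : nat -> nat -> bool) :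
  (forall i j, p i j -> j < lam i) -> inS (cells p) =2 p.
Proof.
move=> p_inD i j; rewrite inS_cells.
by case p_ij: (p i j); rewrite ?andbF // andbT; apply/inD_box/p_inD.
Qed.

Lemma inS_setU (A B : {set cell}) i j : inS (A :|: B) i j = inS A i j || inS B i j.
Proof.
apply/inSP/orP => [[x] | [/inSP [x Ax xij] | /inSP [x Bx xij]]].
- by rewrite inE => /orP [] ? xij; [left | right]; apply/inSP; exists x.
- by exists x; rewrite // inE Ax.
- by exists x; rewrite // inE Bx orbT.
Qed.

Lemma disjoint_cells (p q : nat -> nat -> bool) :
  (forall i j, p i j -> q i j -> false) -> [disjoint cells p & cells q].
Proof.
move=> pq; rewrite -setI_eq0; apply/eqP/setP => x; rewrite !inE.
by case p_x: (p _ _); case q_x: (q _ _) => //; case: (pq _ _ p_x q_x).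
Qed.

Lemma cells_inS (D : {set cell}) : cells (inS D) = D.
Proof. by apply/setP => x; rewrite inE inS_mem. Qed.

(** * Excited diagrams, row by row *)

Lemma nth_part_succ k : lam k.+1 <= lam k.
Proof. exact/nth_part_leq/leqnSn. Qed.

Definition movable (D : {set cell}) i j :=
  [&& inS D i j, j.+1 < lam i.+1, ~~ inS D i j.+1, ~~ inS D i.+1 j & ~~ inS D i.+1 j.+1].

Definition moved (D : {set cell}) i j : {set cell} :=
  cells (fun a b => inS D a b && ~~ ((a == i) && (b == j)) || (a == i.+1) && (b == j.+1)).

Lemma inS_moved D i j : j.+1 < lam i.+1 -> inS (moved D i j) =2
  fun a b => inS D a b && ~~ ((a == i) && (b == j)) || (a == i.+1) && (b == j.+1).
Proof.
move=> lt_j a b; rewrite inS_cells.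
case D_ab: (inS D a b) => /=; first by case/andP: (inS_box D_ab) => -> ->.
case: eqP => [->|]; case: eqP => [->|] //=; rewrite ?andbF //.
by case/andP: (inD_box lt_j) => -> ->.
Qed.

Lemma movedE D (c : cell) : moved D c.1 c.2 =
  [set x | (x \in D) && (x != c) || ((x.1 : nat) == c.1.+1) && ((x.2 : nat) == c.2.+1)].
Proof. by apply/setP => x; rewrite !inE inS_mem cell_eq. Qed.

Lemma exc_stepP D E : exc_step D E <-> exists i j, movable D i j /\ E = moved D i j.
Proof.
split => [/existsP [c /and3P [Dc allowed /eqP ->]] | [i [j [mov ->]]]].
  by exists c.1, c.2; rewrite movedE; split => //; rewrite /movable inS_mem Dc -inDE.
case/and5P: mov => /inSP [c Dc [<- <-]] lt_c free1 free2 free3.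
by apply/existsP; exists c; rewrite Dc movedE eqxx andbT /exc_allowed inDE lt_c free1 free2 free3.
Qed.

(* The rows of mu from row k on (see Dmu_inner_cells). *)
Definition inner_row k := (lam k.+1).-1.

Definition inner_cells k : {set cell} := cells (fun i j => (k <= i) && (j.+1 < lam i.+1)).

Definition excited_from k (D : {set cell}) := connect (@exc_step la) (inner_cells k) D.

Lemma inS_inner_cells k : inS (inner_cells k) =2 fun a b => (k <= a) && (b.+1 < lam a.+1).
Proof.
apply: inS_cellsE => a b /andP [_ lt_b].
exact: leq_trans (ltnW lt_b) (nth_part_succ a).
Qed.

Lemma excited_from_inD k D : excited_from k D -> forall a b, inS D a b -> (k <= a) && (b < lam a).
Proof.
move: D; apply: connect_ind => [a b | D _ _ IH /exc_stepP [i [j [mov ->]]] a b].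
  rewrite inS_inner_cells => /andP [-> lt_b].
  exact: leq_trans (ltnW lt_b) (nth_part_succ a).
case/and5P: mov => D_ij lt_j _ _ _.
rewrite inS_moved // => /orP [/andP [/IH //] | /andP [/eqP -> /eqP ->]].
by case/andP: (IH _ _ D_ij) => le_ki _; rewrite lt_j ltnW.
Qed.

(* [kept k t] are the first t cells of row k of mu, left in place; [shifted k t] are the
   other cells of that row, each moved one step down-right. *)
Definition kept k t : {set cell} := cells (fun i j => (i == k) && (j < t)).

Definition shifted k t : {set cell} := cells (fun i j => (i == k.+1) && (t < j <= inner_row k)).

Definition glue k t (D' : {set cell}) := kept k t :|: shifted k t :|: D'.

Definition row_lt (D : {set cell}) i t := forall j, inS D i j -> j < t.

Lemma inS_glue k t D' : t <= inner_row k -> inS (glue k t D') =2 fun a b =>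
  [|| (a == k) && (b < t), (a == k.+1) && (t < b <= inner_row k) | inS D' a b].
Proof.
move=> le_t a b; rewrite !inS_setU !inS_cellsE -?orbA // => i j /andP [/eqP -> lt_j].
all: have := nth_part_succ k; move: le_t lt_j; rewrite /inner_row; lia.
Qed.

Lemma glue_inner_cells k : glue k (inner_row k) (inner_cells k.+1) = inner_cells k.
Proof.
apply: eq_set_inS => a b; rewrite inS_glue // !inS_inner_cells /inner_row.
have := nth_part_succ k; case: (ltngtP k a) => [|lt_ak|<-]; lia.
Qed.

Lemma moved_glue_kept k t D' : t < inner_row k -> excited_from k.+1 D' ->
  moved (glue k t.+1 D') k t = glue k t D'.
Proof.
move=> lt_t exD'; apply: eq_set_inS => a b.
have lt_t1 : t.+1 < lam k.+1 by move: lt_t; rewrite /inner_row; lia.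
rewrite inS_moved // !inS_glue // ?(ltnW lt_t) //.
by have := excited_from_inD exD' (a:=a) (b:=b); case: (inS D' a b) => /= [/(_ isT)|_]; lia.
Qed.

Lemma movable_glue_kept k t D' : t < inner_row k -> excited_from k.+1 D' -> row_lt D' k.+1 t ->
  movable (glue k t.+1 D') k t.
Proof.
move=> lt_t exD' ltD'.
have D'_k j : inS D' k j = false.
  by apply/negbTE/negP => /(excited_from_inD exD') /andP []; rewrite ltnn.
have D'_ge j : t <= j -> inS D' k.+1 j = false.
  by move=> le_tj; apply/negbTE/negP => /ltD'; rewrite ltnNge le_tj.
rewrite /movable !inS_glue // !D'_k !D'_ge //; move: lt_t; rewrite /inner_row; lia.
Qed.

Lemma movable_glue k t D' i j : t <= inner_row k -> excited_from k.+1 D' -> row_lt D' k.+1 t ->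
  inS D' i j -> movable (glue k t D') i j = movable D' i j.
Proof.
move=> le_t exD' ltD' D'_ij; rewrite /movable !inS_glue // D'_ij orbT.
have /andP [le_ki _] := excited_from_inD exD' D'_ij.
have lt_jt : i = k.+1 -> j < t by move=> ei; apply: ltD'; rewrite -ei.
by case: (inS D' i j.+1); case: (inS D' i.+1 j); case: (inS D' i.+1 j.+1) => /=; lia.
Qed.

Lemma moved_glue k t D' i j : t <= inner_row k -> excited_from k.+1 D' -> row_lt D' k.+1 t ->
  movable D' i j -> moved (glue k t D') i j = glue k t (moved D' i j).
Proof.
move=> le_t exD' ltD' /and5P [D'_ij lt_j _ _ _]; apply: eq_set_inS => a b.
have /andP [le_ki _] := excited_from_inD exD' D'_ij.
have lt_bt : inS D' a b -> a = k.+1 -> b < t by move=> D'_ab ea; apply: ltD'; rewrite -ea.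
have lt_jt : i = k.+1 -> j < t by move=> ei; apply: ltD'; rewrite -ei.
rewrite inS_moved // !inS_glue // inS_moved //.
by have := excited_from_inD exD' (a:=a) (b:=b); move: lt_bt; case: (inS D' a b) => /=; lia.
Qed.

Lemma row_lt_moved k t D' i j : k < i -> j.+1 < lam i.+1 -> row_lt D' k.+1 t ->
  row_lt (moved D' i j) k.+1 t.
Proof. by move=> lt_ki lt_j ltD' b; rewrite inS_moved // => /orP [/andP [/ltD'] | ] //; lia. Qed.

Lemma excited_from_decomp k D : excited_from k D ->
  exists t D', [/\ t <= inner_row k, excited_from k.+1 D', row_lt D' k.+1 t & D = glue k t D'].
Proof.
move: D; apply: connect_ind.
  exists (inner_row k), (inner_cells k.+1); rewrite glue_inner_cells; split => //.
    exact: connect0.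
  by move=> b; rewrite inS_inner_cells /inner_row; have := nth_part_succ k.+1; lia.
move=> _ E _ [t [D' [le_t exD' ltD' ->]]] /exc_stepP [i [j [mov ->]]].
case/and5P: (mov) => G_ij lt_j free1 free2 free3.
move: G_ij; rewrite inS_glue // => /or3P [/andP [/eqP ei lt_jt] | /andP [/eqP ei le_j] | D'_ij].
- subst i; have et : t = j.+1 by move: free1; rewrite inS_glue //; lia.
  subst t; exists j, D'; rewrite moved_glue_kept //; split => //; first exact: ltnW.
  have D'_j : inS D' k.+1 j = false.
    by apply: negbTE; apply: contra free2; rewrite inS_glue // => ->; rewrite !orbT.
  move=> b D'_b; have := ltD' b D'_b; case: (b =P j) => [ebj|]; last lia.
  by move: D'_b; rewrite ebj D'_j.
- exfalso; subst i; move: free1 lt_j le_j; rewrite inS_glue // /inner_row.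
  have := nth_part_succ k.+1; lia.
have movD' : movable D' i j by rewrite -(movable_glue le_t exD' ltD' D'_ij).
exists t, (moved D' i j); rewrite moved_glue //; split => //.
  by apply: connect_trans exD' (connect1 _); apply/exc_stepP; exists i, j.
by case/andP: (excited_from_inD exD' D'_ij) => lt_ki _; apply: row_lt_moved.
Qed.

Definition row_count i (D : {set cell}) := #|[set x in D | (x.1 : nat) == i]|.

Lemma card_row_segment i a b : i < size la -> b <= lam 0 ->
  #|cells (fun r c => (r == i) && (a <= c < b))| = b - a.
Proof.
move=> lt_i le_b.
have -> : cells (fun r c => (r == i) && (a <= c < b)) =
          setX [set r : 'I_(size la) | i <= r < i.+1] [set c : 'I_(lam 0) | a <= c < b].
  by apply/setP => -[r c]; rewrite !inE /= ltnS -eqn_leq eq_sym.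
by rewrite cardsX !card_ord_interval // subSnn mul1n.
Qed.

Lemma row_count_glue k t D' : t <= inner_row k -> excited_from k.+1 D' ->
  row_count k (glue k t D') = t.
Proof.
move=> le_t exD'; rewrite /row_count.
have -> : [set x in glue k t D' | (x.1 : nat) == k] = cells (fun r c => (r == k) && (0 <= c < t)).
  apply/setP => x; rewrite [in LHS]inE -inS_mem inS_glue // [in RHS]inE.
  by have := excited_from_inD exD' (a:=x.1) (b:=x.2); case: (inS D' _ _) => /= [/(_ isT)|_]; lia.
case: t le_t => [|t] le_t.
  by apply/eqP; rewrite cards_eq0; apply/eqP/setP => x; rewrite !inE; lia.
have /andP [lt_k lt_t] : (k < size la) && (t < lam 0).
  by apply: inD_box; have := nth_part_succ k; move: le_t; rewrite /inner_row; lia.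
by rewrite card_row_segment ?subn0.
Qed.

Lemma row_lt_row_count k t D : excited_from k D -> row_lt D k t <-> row_count k D <= t.
Proof.
case/excited_from_decomp => t1 [D' [le_t1 exD' _ ->]]; rewrite row_count_glue //.
split => [lt_D | le_t1t b].
  rewrite leqNgt; apply/negP => lt_tt1.
  by have := lt_D t; rewrite inS_glue // eqxx lt_tt1 ltnn => /(_ isT).
rewrite inS_glue // => /or3P [/andP [_ lt_b] | | /(excited_from_inD exD') /andP []].
- exact: leq_trans lt_b le_t1t.
- lia.
- by rewrite ltnn.
Qed.

Lemma row_count_le k D : excited_from k D -> row_count k D <= inner_row k.
Proof. by case/excited_from_decomp => t [D' [le_t exD' _ ->]]; rewrite row_count_glue. Qed.

Lemma row_lt_inner k D' : excited_from k.+1 D' -> row_lt D' k.+1 (inner_row k).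
Proof.
move=> exD'; apply/(row_lt_row_count _ exD'); apply: leq_trans (row_count_le exD') _.
by rewrite /inner_row; have := nth_part_succ k.+1; lia.
Qed.

Lemma excited_from_glue_inner k D' : excited_from k.+1 D' ->
  excited_from k (glue k (inner_row k) D').
Proof.
move: D'; apply: connect_ind; first by rewrite glue_inner_cells; apply: connect0.
move=> D' _ exD' IH /exc_stepP [i [j [mov ->]]].
have ltD' := row_lt_inner exD'; have D'_ij : inS D' i j by case/andP: mov.
apply: connect_trans IH (connect1 _); apply/exc_stepP; exists i, j.
by rewrite movable_glue // moved_glue.
Qed.

Lemma excited_from_glue k t D' : t <= inner_row k -> excited_from k.+1 D' -> row_lt D' k.+1 t ->
  excited_from k (glue k t D').
Proof.
move=> le_t exD' ltD'.
suff glue_n n : n <= inner_row k - t -> excited_from k (glue k (inner_row k - n) D').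
  by have := glue_n _ (leqnn _); rewrite subKn.
elim: n => [_|n IHn lt_n]; first by rewrite subn0 excited_from_glue_inner.
apply: connect_trans (IHn (ltnW lt_n)) (connect1 _); apply/exc_stepP.
have -> : inner_row k - n = (inner_row k - n.+1).+1 by lia.
have ltD'_n : row_lt D' k.+1 (inner_row k - n.+1).
  by move=> b /ltD' lt_b; apply: leq_trans lt_b _; lia.
exists k, (inner_row k - n.+1); rewrite moved_glue_kept ?movable_glue_kept //; lia.
Qed.

Lemma disjoint_glue k t D' : excited_from k.+1 D' -> row_lt D' k.+1 t ->
  [disjoint kept k t :|: shifted k t & D'].
Proof.
move=> exD' ltD'; rewrite -setI_eq0 setIUl setU_eq0 !setI_eq0 -[D']cells_inS.
apply/andP; split; apply: disjoint_cells => a b /andP [/eqP -> ?].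
  by move/(excited_from_inD exD'); rewrite ltnn.
by move/ltD'; lia.
Qed.

Lemma glueK k t (D' : {set cell}) : [disjoint kept k t :|: shifted k t & D'] ->
  glue k t D' :\: (kept k t :|: shifted k t) = D'.
Proof. by move=> dis; rewrite setDUl setDv set0U; apply/setDidPl; rewrite disjoint_sym. Qed.

Lemma sum_excited_row k t (F : {set cell} -> nat) : t <= inner_row k ->
  \sum_(D | excited_from k D && (row_count k D == t)) F D =
  \sum_(D' | excited_from k.+1 D' && (row_count k.+1 D' <= t)) F (glue k t D').
Proof.
move=> le_t; set S := [set D' | excited_from k.+1 D' && (row_count k.+1 D' <= t)].
have glue_inj : {in S &, injective (glue k t)}.
  move=> D1 D2; rewrite !inE => /andP [ex1 /(row_lt_row_count t ex1) lt1].
  move=> /andP [ex2 /(row_lt_row_count t ex2) lt2] eq12.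
  by rewrite -(glueK (disjoint_glue ex1 lt1)) eq12 glueK // disjoint_glue.
rewrite [RHS](eq_bigl (fun D' => D' \in S)); last by move=> D'; rewrite /S inE.
rewrite -(big_imset F glue_inj); apply: eq_bigl => D.
apply/andP/imsetP => [[exD /eqP rowD] | [D' S_D' ->]].
  case: (excited_from_decomp exD) rowD => t1 [D' [le_t1 exD' ltD' ->]].
  rewrite row_count_glue // => et; subst t1.
  by exists D'; rewrite // /S inE exD'; apply/row_lt_row_count.
move: S_D'; rewrite /S inE => /andP [exD' /(row_lt_row_count t exD') ltD'].
by rewrite excited_from_glue // row_count_glue.
Qed.

(** * Hook weights *)

Definition weight (D : {set cell}) := \prod_(c in D) hook c.

Lemma weight_setU (A B : {set cell}) : [disjoint A & B] -> weight (A :|: B) = weight A * weight B.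
Proof. by move=> dis; rewrite /weight -bigU //; apply: eq_bigl => c; rewrite inE. Qed.

Definition leg i j := #|[set y : 'I_(size la) | (i < y) && (j < lam y)]|.

Definition hook_len i j := lam i - j + leg i j.

Lemma hookE (x : cell) : x.2 < lam x.1 -> hook x = hook_len x.1 x.2.
Proof.
move=> lt_x; rewrite /hook /hook_len.
set arm := cells (fun r c => (r == x.1) && (x.2 <= c < lam x.1)).
set below := setX [set y : 'I_(size la) | (x.1 < y) && (x.2 < lam y)]
                  [set z : 'I_(lam 0) | x.2 <= z < x.2.+1].
transitivity #|arm :|: below|.
  apply: eq_card => -[y z]; rewrite !inE inDE /=.
  by case: (eqVneq (y : nat) x.1) => [->|]; lia.
rewrite cardsU (_ : arm :&: below = set0); last by apply/setP => -[y z]; rewrite !inE /=; lia.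
rewrite cards0 subn0 cardsX card_ord_interval // subSnn muln1 card_row_segment //.
exact: nth_part_leq.
Qed.

Lemma leg_nonincr i j j' : j <= j' -> leg i j' <= leg i j.
Proof.
by move=> le_j; apply: subset_leq_card; apply/subsetP => y; rewrite !inE => /andP [-> /=]; lia.
Qed.

Lemma leg_eq0 i j : lam i.+1 <= j -> leg i j = 0.
Proof.
move=> le_j; apply/eqP; rewrite cards_eq0; apply/eqP/setP => y; rewrite !inE.
by case lt_iy: (i < y) => //=; have := nth_part_leq lt_iy; lia.
Qed.

Lemma weight_gt0 D : (forall a b, inS D a b -> b < lam a) -> 0 < weight D.
Proof.
move=> D_inD; apply: prodn_cond_gt0 => c Dc.
have lt_c : c.2 < lam c.1 by apply: D_inD; rewrite inS_mem.
by rewrite hookE // /hook_len addn_gt0 subn_gt0 lt_c.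
Qed.

Definition cell_at i j : {set cell} := cells (fun a b => (a == i) && (b == j)).

Lemma weight_cell_at i j : j < lam i -> weight (cell_at i j) = hook_len i j.
Proof.
move=> lt_j; case/andP: (inD_box lt_j) => lt_i lt_j0.
have -> : cell_at i j = [set (Ordinal lt_i, Ordinal lt_j0)].
  by apply/setP => x; rewrite !inE cell_eq.
by rewrite /weight big_set1 hookE.
Qed.

Lemma weight_kept_succ k t : t < lam k -> weight (kept k t.+1) = weight (kept k t) * hook_len k t.
Proof.
move=> lt_t; rewrite -weight_cell_at // -weight_setU.
  by congr weight; apply/setP => x; rewrite !inE; lia.
by apply: disjoint_cells => a b /andP [_ ?] /andP [_ /eqP]; lia.
Qed.

Lemma weight_shifted_pred k t : t < inner_row k ->
  weight (shifted k t) = hook_len k.+1 t.+1 * weight (shifted k t.+1).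
Proof.
move=> lt_t; rewrite -weight_cell_at -?weight_setU.
- by congr weight; apply/setP => x; rewrite !inE; lia.
- by apply: disjoint_cells => a b /andP [_ /eqP] ? /andP [_ ?]; lia.
- by move: lt_t; rewrite /inner_row; lia.
Qed.

Definition row_weight k t := \sum_(D | excited_from k D && (row_count k D == t)) weight D.

Definition row_weight_le k t := \sum_(D | excited_from k D && (row_count k D <= t)) weight D.

Lemma row_weight_le_partial_sum k t : row_weight_le k t = \sum_(q < t.+1) row_weight k q.
Proof.
elim: t => [|t IHt].
  by rewrite big_ord1; apply: eq_bigl => D; rewrite leqn0.
rewrite big_ord_recr -IHt /row_weight_le /row_weight (bigID (fun D => row_count k D <= t)) /=.
by congr (_ + _); apply: eq_bigl => D; case: (excited_from k D) => //=; lia.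
Qed.

Lemma row_weight_glue k t : t <= inner_row k ->
  row_weight k t = weight (kept k t) * weight (shifted k t) * row_weight_le k.+1 t.
Proof.
move=> le_t; rewrite /row_weight sum_excited_row // /row_weight_le big_distrr.
apply: eq_bigr => D' /andP [exD' /(row_lt_row_count t exD') ltD'].
rewrite /glue weight_setU ?disjoint_glue // weight_setU //.
by apply: disjoint_cells => a b /andP [/eqP -> _] /andP [/eqP]; lia.
Qed.

Lemma row_weight_gt_inner k t : inner_row k < t -> row_weight k t = 0.
Proof.
move=> lt_t; rewrite /row_weight big_pred0 // => D; apply/negP => /andP [exD /eqP rowD].
by have := row_count_le exD; rewrite rowD leqNgt lt_t.
Qed.

Definition row_weight_ratio k := forall t, t < inner_row k ->
  hook_len k t * row_weight k t <= (lam k - t.+1) * row_weight k t.+1.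

(* The summand [0 < row_weight_le k r] makes the bound strict whenever the left-hand side is
   non-zero; it is the source of C_j < j * C_(j-1) beyond w(I). *)
Definition row_weight_le_ratio k := forall r, r < inner_row k ->
  leg k r.+1 * row_weight_le k r + (0 < row_weight_le k r) <= (lam k - r.+1) * row_weight k r.+1.

Lemma row_weight_le_succ k t : row_weight_le k t.+1 = row_weight_le k t + row_weight k t.+1.
Proof. by rewrite !row_weight_le_partial_sum big_ord_recr. Qed.

Lemma row_weight_ratio_of_le k : row_weight_le_ratio k.+1 -> row_weight_ratio k.
Proof.
move=> ratio_le t lt_t.
have lt_tk : t < lam k by move: lt_t; rewrite /inner_row; have := nth_part_succ k; lia.
rewrite !row_weight_glue ?(ltnW lt_t) // weight_kept_succ // (weight_shifted_pred lt_t).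
suff key : hook_len k.+1 t.+1 * row_weight_le k.+1 t <= (lam k - t.+1) * row_weight_le k.+1 t.+1.
  by have := leq_mul (leqnn (hook_len k t * weight (kept k t) * weight (shifted k t.+1))) key; lia.
have le_lam : lam k.+1 - t.+1 <= lam k - t.+1 by have := nth_part_succ k; lia.
rewrite row_weight_le_succ /hook_len mulnDl mulnDr.
case: (ltnP t (inner_row k.+1)) => [lt_t1 | le_t1].
  apply: leq_add; first exact: leq_mul.
  apply: leq_trans (leq_trans (leq_addr _ _) (ratio_le t lt_t1)) _; exact: leq_mul.
rewrite leg_eq0 ?mul0n ?addn0; last by move: le_t1; rewrite /inner_row; lia.
exact: leq_trans (leq_mul le_lam (leqnn _)) (leq_addr _ _).
Qed.

Lemma row_weight_le_ratio_of_ratio k : row_weight_ratio k -> row_weight_le_ratio k.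
Proof.
move=> ratio r lt_r; rewrite row_weight_le_partial_sum; apply: partial_sum_ratio.
  by move: lt_r; rewrite /inner_row; have := nth_part_succ k; lia.
move=> q le_q; apply: leq_trans _ (ratio q (leq_ltn_trans le_q lt_r)).
by rewrite leq_mul2r /hook_len leq_add2l leg_nonincr ?orbT // leqW.
Qed.

Lemma row_weight_le_ratio_all k : row_weight_le_ratio k.
Proof.
have [n] := ubnP (size la - k); elim: n k => // n IHn k lt_k.
case: (ltnP k (size la)) => [lt_ks | le_sk].
  by apply/row_weight_le_ratio_of_ratio/row_weight_ratio_of_le/IHn; lia.
by move=> r; rewrite /inner_row nth_default //; lia.
Qed.

(** * Naruse-Newton coefficients *)

Lemma wI_eq : lam 0 = lam 1 -> wI la = lam 0 - lam 2.
Proof.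
move=> la_top; have le21 := nth_part_succ 1.
have sorted_la : sorted geq la by case/andP: la_part.
rewrite /wI /sI (eq_count (a2 := fun j => lam 2 <= j < lam 1)) => [|j].
  by rewrite count_iota_interval; lia.
by rewrite eqn_leq leqNgt !conj_part_gt // -leqNgt andbC.
Qed.

Lemma rim_cellE i j : rim_cell la i j = (j < lam i) && ~~ (j.+1 < lam i.+1).
Proof. by rewrite /rim_cell !inDE; have := nth_part_succ i; lia. Qed.

Section NaruseNewton.
Variable mu : seq nat.
Hypotheses (mu_inner : muI la mu) (la_top : lam 0 = lam 1).

Local Notation s := (sI la).
Local Notation N j := (NN la mu j).

Lemma Dmu_inner_cells : Dmu la mu = inner_cells 0.
Proof.
case: mu_inner => _ mu_cells; apply/setP => -[[a lt_a] [b lt_b]].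
by rewrite !inE mu_cells rim_cellE !inDE /=; have := nth_part_succ a; lia.
Qed.

Lemma sI_inner : s = inner_row 0.
Proof. by rewrite /sI /inner_row la_top. Qed.

Lemma NN_glue j : N j = weight (shifted 0 (s - j)) * row_weight_le 1 (s - j).
Proof.
rewrite /NN /excited Dmu_inner_cells sI_inner.
rewrite (sum_excited_row _ (leq_subr _ _)) /row_weight_le big_distrr /=.
apply: eq_bigr => D' /andP [exD' /(row_lt_row_count _ exD') ltD'].
rewrite -weight_setU; last first.
  rewrite -[D']cells_inS; apply: disjoint_cells => a b /andP [/eqP -> ?] /ltD'; lia.
apply: eq_bigl => -[[a lt_a] [b lt_b]]; rewrite !inE -inS_mem /=.
have lt_bt : inS D' a b -> a = 1 -> b < inner_row 0 - j.
  by move=> D'_ab ea; apply: ltD'; rewrite -ea.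
have := excited_from_inD exD' (a:=a) (b:=b).
by move: lt_bt; case: (inS D' a b) => /=; lia.
Qed.

Lemma NN_succE j : j < s ->
  N j.+1 = (j.+1 + leg 1 (s - j)) *
           (weight (shifted 0 (s - j)) * row_weight_le 1 (s - j.+1)).
Proof.
move=> lt_js; rewrite NN_glue.
have lt_r : s - j.+1 < inner_row 0 by rewrite -sI_inner; lia.
rewrite (weight_shifted_pred lt_r) (_ : (s - j.+1).+1 = s - j); last lia.
by rewrite /hook_len -la_top (_ : lam 0 - (s - j) = j.+1) ?mulnA //; move: lt_js; rewrite /sI; lia.
Qed.

Lemma NN_predE j : j < s ->
  N j = weight (shifted 0 (s - j)) * (row_weight_le 1 (s - j.+1) + row_weight 1 (s - j)).
Proof.
by move=> lt_js; rewrite NN_glue (_ : s - j = (s - j.+1).+1) ?row_weight_le_succ //; lia.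
Qed.

Lemma NN_succ_eq j : j < s -> j < wI la -> N j.+1 = j.+1 * N j.
Proof.
move=> lt_js lt_jw; rewrite NN_succE // NN_predE // leg_eq0 ?row_weight_gt_inner ?addn0 //.
all: move: lt_js lt_jw; rewrite wI_eq // /inner_row /sI; lia.
Qed.

Lemma NN_succ_lt j : j < s -> wI la <= j -> 0 < N j.+1 -> N j.+1 < j.+1 * N j.
Proof.
move=> lt_js le_wj.
have lt_r : s - j.+1 < inner_row 1 by move: lt_js le_wj; rewrite wI_eq // /inner_row /sI; lia.
have := row_weight_le_ratio_all lt_r; rewrite (_ : (s - j.+1).+1 = s - j); last lia.
rewrite (_ : lam 1 - (s - j) = j.+1); last by move: lt_js; rewrite -la_top /sI; lia.
rewrite NN_succE // NN_predE //.
set W := weight _; set U := row_weight_le _ _; set T := row_weight _ _.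
rewrite !muln_gt0 => ratio /and3P [_ W_gt0 U_gt0].
rewrite [_ * (W * U)]mulnCA [j.+1 * _]mulnCA ltn_pmul2l // mulnDl mulnDr.
by move: ratio; rewrite U_gt0; lia.
Qed.

Lemma NN0_gt0 : 0 < N 0.
Proof.
rewrite NN_glue subn0 muln_gt0; apply/andP; split.
  apply: weight_gt0 => a b; rewrite inS_cells => /and3P [_ _ /andP [/eqP -> le_b]].
  by move: le_b; rewrite /inner_row; lia.
have ex1 : excited_from 1 (inner_cells 1) by apply: connect0.
rewrite /row_weight_le (bigD1 (inner_cells 1)) /=; last first.
  rewrite ex1 (leq_trans (row_count_le ex1)) // sI_inner /inner_row.
  by have := nth_part_succ 1; lia.
by rewrite ltn_addr // weight_gt0 // => a b /(excited_from_inD ex1) /andP [].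
Qed.

Lemma NN_succ_le j : j < s -> N j.+1 <= j.+1 * N j.
Proof.
move=> lt_js; case: (ltnP j (wI la)) => [lt_jw | le_wj]; first by rewrite NN_succ_eq.
by case: (posnP (N j.+1)) => [-> // | pos]; apply/ltnW/NN_succ_lt.
Qed.

Lemma NN_fact j : j <= s -> j <= wI la -> N j = j`! * N 0.
Proof.
elim: j => [|j IHj] le_js le_jw; first by rewrite mul1n.
by rewrite NN_succ_eq // IHj ?factS ?mulnA // ltnW.
Qed.

Lemma NN_fact_le a b : a <= b -> b <= s -> N b * a`! <= b`! * N a.
Proof.
elim: b => [|b IHb]; first by rewrite leqn0 => /eqP -> _; rewrite mulnC.
rewrite leq_eqVlt => /orP [/eqP -> _ | lt_ab lt_bs]; first by rewrite mulnC.
rewrite factS -mulnA; apply: leq_trans (leq_mul (NN_succ_le lt_bs) (leqnn _)) _.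
by rewrite -mulnA leq_mul2l IHb ?orbT // ltnW.
Qed.

Lemma NN_fact_lt a b : a < b -> b <= s -> wI la < b -> 0 < N b -> N b * a`! < b`! * N a.
Proof.
case: b => // b lt_ab lt_bs le_wb Nb_gt0.
apply: (@leq_trans ((N b.+1).+1 * a`!)); first by rewrite mulSn; have := fact_gt0 a; lia.
apply: leq_trans (leq_mul (NN_succ_lt lt_bs le_wb Nb_gt0) (leqnn _)) _.
by rewrite factS -!mulnA leq_mul2l NN_fact_le ?orbT // ltnW.
Qed.

End NaruseNewton.
End Diagram.

Local Open Scope ring_scope.
Import GRing.Theory Num.Theory.

Lemma natr_div_eq {F : numFieldType} {x y u v : nat} : (0 < y)%N -> (0 < v)%N ->
  (x%:R / y%:R = u%:R / v%:R :> F) <-> (x * v = u * y)%N.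
Proof.
move=> y_gt0 v_gt0; have [y_neq0 v_neq0] : y%:R != 0 :> F /\ v%:R != 0 :> F.
  by rewrite !pnatr_eq0 -!lt0n.
split => [/eqP | eq_xu]; last by apply/eqP; rewrite eqr_div // -!natrM eq_xu.
by rewrite eqr_div // -!natrM eqr_nat => /eqP.
Qed.

Theorem corollary4p6 (I : {fset nat}) (la mu : seq nat) (a b : nat) :
  I != fset0 -> (forall i, i \in I -> (0 < i)%N) ->
  lambdaI I la -> muI la mu ->
  (a < b)%N -> (b <= sI la)%N ->
  ((NN la mu a)%:R / (NN la mu b)%:R = (a`!)%:R / (b`!)%:R :> rat)
    <-> (b <= wI la)%N.
Proof.
move=> _ _ [la_part la_top _] mu_inner lt_ab le_bs.
split => [eq_ratio | le_bw].
  rewrite leqNgt; apply/negP => lt_wb.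
  have Nb_gt0 : (0 < NN la mu b)%N.
    (* otherwise the left-hand side is a division by 0, i.e. 0 *)
    rewrite lt0n; apply/negP => /eqP Nb0; move: eq_ratio; rewrite Nb0 invr0 mulr0 => /esym/eqP.
    by rewrite mulf_eq0 invr_eq0 !pnatr_eq0 !eqn0Ngt !fact_gt0.
  move/(natr_div_eq Nb_gt0 (fact_gt0 b)): eq_ratio => eq_nat.
  have := NN_fact_lt la_part mu_inner la_top lt_ab le_bs lt_wb Nb_gt0.
  by rewrite (mulnC (NN la mu b)) (mulnC b`!) eq_nat ltnn.
have NN_factE := NN_fact la_part mu_inner la_top.
have [le_as le_aw] := (ltnW (leq_trans lt_ab le_bs), ltnW (leq_trans lt_ab le_bw)).
have Nb_gt0 : (0 < NN la mu b)%N.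
  by rewrite (NN_factE _ le_bs le_bw) muln_gt0 fact_gt0 (NN0_gt0 la_part mu_inner la_top).
apply/(natr_div_eq Nb_gt0 (fact_gt0 b)).
by rewrite (NN_factE _ le_as le_aw) (NN_factE _ le_bs le_bw) mulnAC mulnA.
Qed.
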